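(* Let $1\leq k\leq n$ and let $\Lambda_1,\dots,\Lambda_d\subset\mathbb{P}^n$ be $(k-1)$-dimensional linear subspaces satisfying $\mathrm{SP}(n-k)$. Let $m\geq 2$ and consider a partition of $\{1,\dots,d\}$ into the consecutive blocks $$D_1=\{1,\dots,d_1\},\ D_2=\{d_1+1,\dots,d_1+d_2\},\ \dots,\ D_m=\Big\{\textstyle\sum_{i=1}^{m-1}d_i+1,\dots,d\Big\},$$ where $d_j=|D_j|$, and let $S_j:=\mathrm{Span}(\Lambda_i : i\in D_j)$. Suppose that for every $j=1,\dots,m-1$: (i) the subspaces $\Lambda_i$, $i\in D_j$, satisfy $\mathrm{SP}(n-k)$; (ii) the subspaces $\Lambda_i$, $i\in\{1,\dots,d\}\setminus D_j$, do not satisfy $\mathrm{SP}(n-k)$; (iii) $\dim S_j\leq d_j+k-3-\varepsilon_j$ for some integer $\varepsilon_j\geq 0$. Then $$\dim\mathrm{Span}(\Lambda_1,\dots,\Lambda_d)\leq\dim S_m+\sum_{j=1}^{m-1}(d_j-\varepsilon_j)-m.$$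
   Context: For $(k-1)$-dimensional linear subspaces $\Lambda_1,\dots,\Lambda_e\subset\mathbb{P}^N$ (not necessarily distinct), $\mathrm{SP}(N-k)$ means: for every $j\in\{1,\dots,e\}$ and every $(N-k)$-dimensional linear subspace $L\subset\mathbb{P}^N$ meeting each $\Lambda_i$ with $i\neq j$, $L$ also meets $\Lambda_j$. *)

From HB Require Import structures.
From mathcomp Require Import all_boot all_order all_algebra.
Set Implicit Arguments. Unset Strict Implicit. Unset Printing Implicit Defensive.
Import Order.TTheory GRing.Theory Num.Theory.
Local Open Scope ring_scope.

(* Projective space P^N over F is modelled by the row vectors F^(N+1);
   a projective linear subspace is the row space of a square matrix
   'M[F]_(N.+1); its projective dimension is rank - 1 (empty = -1). *)

Definition pdim (F : fieldType) (N : nat) (A : 'M[F]_(N.+1)) : int :=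
  (\rank A)%:Z - 1.

Definition meets (F : fieldType) (N : nat) (A B : 'M[F]_(N.+1)) : bool :=
  (A :&: B)%MS != 0.

Definition spanS (F : fieldType) (N d : nat) (Lam : 'I_d -> 'M[F]_(N.+1))
  (A : {set 'I_d}) : 'M[F]_(N.+1) := (\sum_(i in A) Lam i)%MS.

Definition SP (F : fieldType) (N d : nat) (r : nat)
  (Lam : 'I_d -> 'M[F]_(N.+1)) (A : {set 'I_d}) : Prop :=
  forall j, j \in A -> forall L : 'M[F]_(N.+1), \rank L = r.+1 ->
    (forall i, i \in A -> i != j -> meets L (Lam i)) -> meets L (Lam j).

(* The j-th consecutive block (0-indexed) of sizes ds. *)
Definition block (d m : nat) (ds : 'I_m -> nat) (j : nat) : {set 'I_d} :=
  [set i : 'I_d | (\sum_(l < m | (l < j)%N) ds l <= i)%N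
                  && (i < \sum_(l < m | (l <= j)%N) ds l)%N].

From HB Require Import structures.
From mathcomp Require Import all_boot all_order all_algebra.
From mathcomp Require Import zify.
From Stdlib Require Import Classical_Prop.
Set Implicit Arguments. Unset Strict Implicit. Unset Printing Implicit Defensive.
Import Order.TTheory GRing.Theory Num.Theory.
Local Open Scope ring_scope.

(* Write S_j for the span of the j-th block, Y := S_m and
   c_j := rank S_j + 1 - k, so that (iii) reads c_j + 1 + ε_j ≤ d_j and it
   suffices to show rank (S_1 + ... + S_m) < rank Y + Σ_{j<m} c_j.
   Otherwise Rado's theorem for subspaces yields a nonempty set J of blocks
   and a subspace N with N ∩ (Y + Σ_{j∉J} S_j) = 0 and rank (N ∩ S_j) ≥ c_j
   for j ∈ J; such an N meets every Λ_i of the blocks in J.  Pick j ∈ J: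
   as SP(n-k) fails off D_j, there are q ∉ D_j and an (n-k)-plane L meeting
   every Λ_i with i ∉ D_j, i ≠ q, but not Λ_q, and SP(n-k) on the blocks of
   J puts q outside them.  Then (L ∩ (Y + Σ_{j∉J} S_j)) + N meets every Λ_i
   with i ≠ q but misses Λ_q; enlarged to an (n-k)-plane still missing Λ_q,
   it contradicts SP(n-k) for the whole family. *)

Lemma sum_setD (I : finType) (c : I -> nat) (J K : {set I}) : J \subset K ->
  (\sum_(j in K) c j = \sum_(j in J) c j + \sum_(j in K :\: J) c j)%N.
Proof. by move=> sJK; rewrite (big_setID J) (setIidPr sJK). Qed.

Lemma sum_subn_pred1 (I : finType) (c : I -> nat) (j0 : I) (J : {set I}) :
  (0 < c j0)%N ->
  (\sum_(j in J) (c j - (j == j0)) = \sum_(j in J) c j - (j0 \in J))%N.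
Proof.
move=> cj0; have [j0J | j0J] := boolP (j0 \in J); last first.
  rewrite subn0; apply: eq_bigr => j jJ.
  have : j != j0 by apply: contraNneq j0J => <-.
  by move/negbTE->; rewrite subn0.
rewrite !(big_setD1 j0 j0J) eqxx /=.
rewrite (eq_bigr c) => [|j /setD1P[/negbTE-> _]]; last exact: subn0.
lia.
Qed.

Lemma sum_Posz (I : finType) (P : pred I) (f : I -> nat) :
  \sum_(i | P i) (f i)%:Z = (\sum_(i | P i) f i)%N%:Z.
Proof. by rewrite (big_morph Posz PoszD (erefl _)). Qed.

Lemma card_ord_lt m t : (t <= m)%N -> #|[set j : 'I_m | (j < t)%N]| = t.
Proof.
move=> tm; rewrite -sum1_card (eq_bigl (fun j : 'I_m => j < t)%N) => [|j].
  by rewrite -(big_ord_widen _ (fun _ => 1%N) tm) sum1_card card_ord.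
by rewrite inE.
Qed.

Lemma rank_lt_to_pdim_le (I : finType) (K : {set I}) (a b : nat)
    (c e s : I -> nat) :
  (a < b + \sum_(j in K) c j)%N ->
  (forall j, j \in K -> c j + 1 + e j <= s j)%N ->
  a%:Z - 1 <= b%:Z - 1 + \sum_(j in K) ((s j)%:Z - (e j)%:Z) - (#|K|.+1)%:Z.
Proof.
move=> lt_ab le_ces.
have : (\sum_(j in K) (c j + 1 + e j) <= \sum_(j in K) s j)%N by apply: leq_sum.
by rewrite sumrB !sum_Posz !big_split /= sum1_card; lia.
Qed.

Section Subspaces.
Variables (F : fieldType) (n : nat).
Implicit Types L A Y : 'M[F]_n.

Lemma capmx_addsmx_eq0 m1 m2 m3 m4 (A : 'M[F]_(m1, n)) (B : 'M_(m2, n))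
    (Y : 'M_(m3, n)) (Z : 'M_(m4, n)) : (A <= Z)%MS -> (Y <= Z)%MS ->
  (B :&: Z)%MS = 0 -> (A :&: Y)%MS = 0 -> ((A + B) :&: Y)%MS = 0.
Proof.
move=> sAZ sYZ BZ0 AY0; apply/eqP; rewrite -submx0 -AY0 sub_capmx capmxSr andbT.
apply: submx_trans (capmxS (submx_refl _) sYZ) _.
by rewrite -(matrix_modl B sAZ) BZ0 addsmx0.
Qed.

Lemma capmx_neq0_rank m1 m2 m3 (A : 'M[F]_(m1, n)) (B : 'M_(m2, n))
    (C : 'M_(m3, n)) : (A <= C)%MS -> (B <= C)%MS ->
  (\rank C < \rank A + \rank B)%N -> (A :&: B)%MS != 0.
Proof.
move=> sAC sBC ltC; rewrite -mxrank_eq0 -lt0n.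
have /mxrankS : (A + B <= C)%MS by rewrite addsmx_sub sAC.
by have := mxrank_sum_cap A B; lia.
Qed.

Lemma rV_capmx_eq0 (v : 'rV[F]_n) Y : ~~ (v <= Y)%MS -> (v :&: Y)%MS = 0.
Proof.
move=> vY; apply/eqP; rewrite -mxrank_eq0; apply: contraNT vY => nz.
have : (\rank v <= \rank (v :&: Y))%N.
  by rewrite rank_rV (leq_trans (leq_b1 _)) // lt0n.
rewrite (geq_leqif (mxrank_leqif_sup (capmxSl v Y))).
by move/submx_trans; apply; apply: capmxSr.
Qed.

Lemma complement_ext L A : (L :&: A)%MS = 0 ->
  exists L', [/\ (L <= L')%MS, (\rank L' + \rank A)%N = n & (L' :&: A)%MS = 0].
Proof.
move=> LA0; set C := ((L + A)^C)%MS.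
have L'A0 : ((L + C) :&: A)%MS = 0.
  apply: (capmx_addsmx_eq0 (addsmxSl L A) (addsmxSr L A)) => //.
  by rewrite capmxC capmx_compl.
exists (L + C)%MS; split; rewrite ?addsmxSl // -mxrank_disjoint_sum //.
apply/eqP; rewrite -[_ == n]/(row_full _) -sub1mx.
apply: submx_trans (_ : 1%:M <= L + A + C)%MS _.
  by rewrite sub1mx addsmx_compl_full.
by rewrite -!addsmxA [(A + _)%MS]addsmxC.
Qed.

Lemma sumsmx_subset (I : finType) (S : I -> 'M[F]_n) (J K : {set I}) :
  J \subset K -> (\sum_(j in J) S j <= \sum_(j in K) S j)%MS.
Proof.
move=> sJK; apply/sumsmx_subP => j jJ.
by apply: (sumsmx_sup j) => //; apply: (subsetP sJK).
Qed.

Lemma sumsmx_setU (I : finType) (S : I -> 'M[F]_n) (J K : {set I}) :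
  (\sum_(j in J :|: K) S j :=: \sum_(j in J) S j + \sum_(j in K) S j)%MS.
Proof.
apply/eqmxP/andP; split.
  apply/sumsmx_subP => j; rewrite inE => /orP[] jJ.
    by rewrite (submx_trans _ (addsmxSl _ _)) // (sumsmx_sup j).
  by rewrite (submx_trans _ (addsmxSr _ _)) // (sumsmx_sup j).
by rewrite addsmx_sub !sumsmx_subset ?subsetUl ?subsetUr.
Qed.

Lemma sumsmx_bigcup (I T : finType) (f : T -> 'M[F]_n) (B : I -> {set T})
    (K : {set I}) :
  (\sum_(t in \bigcup_(l in K) B l) f t
     :=: \sum_(l in K) \sum_(t in B l) f t)%MS.
Proof.
apply/eqmxP/andP; split; apply/sumsmx_subP.
  move=> t /bigcupP[l lK tl]; apply: (sumsmx_sup l) => //.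
  exact: (sumsmx_sup t).
by move=> l lK; apply: sumsmx_subset; apply: (bigcup_sup l).
Qed.

End Subspaces.

Section Rado.
Variables (F : fieldType) (n : nat) (I : finType) (S : I -> 'M[F]_n).
Implicit Types (Y N : 'M[F]_n) (c : I -> nat) (J K : {set I}).

Definition hall_condition Y c K := forall J, J \subset K ->
  (\rank Y + \sum_(j in J) c j <= \rank (Y + \sum_(j in J) S j))%N.

Definition transversal Y c K N :=
  [/\ (N <= \sum_(j in K) S j)%MS, (N :&: Y)%MS = 0
    & forall j, j \in K -> (c j <= \rank (N :&: S j))%N].

Lemma hall_condition_subset Y c J K :
  J \subset K -> hall_condition Y c K -> hall_condition Y c J.
Proof. by move=> sJK hK J' sJ'J; apply/hK/(subset_trans sJ'J). Qed.

Lemma rank_addsmx_sumsmx_setU Y J K :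
  \rank (Y + \sum_(j in J :|: K) S j)%MS
    = \rank (Y + \sum_(j in J) S j + \sum_(j in K) S j)%MS.
Proof. by rewrite -addsmxA (adds_eqmx (eqmx_refl Y) (sumsmx_setU S J K)). Qed.

Lemma hall_condition_contract Y c J K : J \subset K ->
  (\rank (Y + \sum_(j in J) S j) <= \rank Y + \sum_(j in J) c j)%N ->
  hall_condition Y c K -> hall_condition (Y + \sum_(j in J) S j)%MS c (K :\: J).
Proof.
move=> sJK tight hK J' sJ'.
have sUK : J :|: J' \subset K.
  by rewrite subUset sJK (subset_trans sJ') ?subsetDl.
have dJ'J : [disjoint J' & J].
  by rewrite disjoints_subset (subset_trans sJ') // setDE subsetIr.
have := hK _ sUK; rewrite rank_addsmx_sumsmx_setU.
by rewrite (sum_setD c (subsetUl J J')) setDUl setDv set0U (setDidPl dJ'J); lia.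
Qed.

Lemma transversal_split Y c J K N1 N2 : J \subset K ->
  transversal Y c J N1 ->
  transversal (Y + \sum_(j in J) S j)%MS c (K :\: J) N2 ->
  transversal Y c K (N1 + N2)%MS.
Proof.
move=> sJK [sN1 N1Y rN1] [sN2 N2Y rN2]; split.
- by rewrite addsmx_sub (submx_trans sN1) ?(submx_trans sN2) ?sumsmx_subset
     ?subsetDl.
- apply: (capmx_addsmx_eq0 _ (addsmxSl _ _) N2Y N1Y).
  exact: submx_trans sN1 (addsmxSr _ _).
- move=> j jK; have [jJ | jJ] := boolP (j \in J).
    by apply: leq_trans (rN1 j jJ) (mxrankS (capmxS (addsmxSl _ _) _)).
  have jKJ : j \in K :\: J by rewrite inE jJ.
  by apply: leq_trans (rN2 j jKJ) (mxrankS (capmxS (addsmxSr _ _) _)).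
Qed.

Section AddVector.
Variables (Y : 'M[F]_n) (c : I -> nat) (K : {set I}) (j0 : I) (v : 'rV[F]_n).
Hypotheses (j0K : j0 \in K) (vS : (v <= S j0)%MS) (vY : ~~ (v <= Y)%MS).

Let c' j := (c j - (j == j0))%N.

Let rank_v : \rank v = 1%N.
Proof. by rewrite rank_rV; case: eqP vY => // ->; rewrite sub0mx. Qed.

Lemma rank_addsmx_rV : \rank (v + Y)%MS = (\rank Y).+1.
Proof. by rewrite mxrank_disjoint_sum ?rV_capmx_eq0 // rank_v. Qed.

Lemma hall_condition_add_vector : (0 < c j0)%N ->
  (forall J, J \subset K -> J != set0 -> J != K ->
     \rank Y + \sum_(j in J) c j < \rank (Y + \sum_(j in J) S j))%N ->
  hall_condition Y c K -> hall_condition (v + Y)%MS c' K.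
Proof.
move=> cj0 slack hK J sJK; rewrite sum_subn_pred1 // rank_addsmx_rV.
have sYvY := addsmxS (addsmxSr v Y) (submx_refl (\sum_(j in J) S j)%MS).
have [j0J | j0J] := boolP (j0 \in J).
  have sum_gt0 : (0 < \sum_(j in J) c j)%N.
    by rewrite (big_setD1 j0 j0J) ltn_addr.
  by rewrite subn1 addSnnS prednK // (leq_trans (hK J sJK)) ?mxrankS.
rewrite subn0; have [-> | J0] := eqVneq J set0.
  by rewrite !big_set0 addsmx0 addn0 rank_addsmx_rV.
have JK : J != K by apply: contraNneq j0J => ->.
by rewrite addSn (leq_trans (slack J sJK J0 JK)) ?mxrankS.
Qed.

Lemma transversal_add_vector N :
  transversal (v + Y)%MS c' K N -> transversal Y c K (v + N)%MS.
Proof.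
move=> [sN NvY rN]; split.
- by rewrite addsmx_sub sN (sumsmx_sup j0).
- exact: capmx_addsmx_eq0 (addsmxSl _ _) (addsmxSr _ _) NvY (rV_capmx_eq0 vY).
- move=> j jK; have := rN j jK; rewrite /c'.
  have [-> | _] := eqVneq j j0; last first.
    by rewrite subn0 => /leq_trans; apply; rewrite mxrankS ?capmxS ?addsmxSr.
  rewrite subn1 => cN.
  have vN0 : (v :&: (N :&: S j0))%MS = 0.
    by apply/eqP; rewrite -submx0 -NvY capmxC capmxS ?capmxSl ?addsmxSl.
  have sub : (v + N :&: S j0 <= (v + N) :&: S j0)%MS.
    by rewrite sub_capmx addsmxS ?capmxSl //= addsmx_sub vS capmxSr.
  apply: leq_trans (mxrankS sub); rewrite mxrank_disjoint_sum // rank_v.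
  by rewrite add1n (leq_trans (leqSpred _)).
Qed.

End AddVector.

(* By induction on sum c + #|K|: split along a
   proper nonempty subfamily J on which the Hall condition is tight, or, if
   there is none, move a vector of some S j0 with c j0 > 0 into Y. *)
Theorem hall_transversal Y c K :
  hall_condition Y c K -> exists N, transversal Y c K N.
Proof.
have [t] := ubnP (\sum_(j in K) c j + #|K|)%N.
elim: t => // t IH in Y c K *; rewrite ltnS => size_t hK.
have [J /and4P[sJK J0 JK tight] | slack] := pickP (fun J =>
  [&& J \subset K, J != set0, J != K
    & \rank (Y + \sum_(j in J) S j) <= \rank Y + \sum_(j in J) c j]%N).
  have ltJ : (#|J| < #|K|)%N by rewrite proper_card // properEneq JK.
  have ltKJ : (#|K :\: J| < #|K|)%N.
    by rewrite cardsD (setIidPr sJK); move: J0; rewrite -card_gt0; lia.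
  have [N1 tN1] : exists N, transversal Y c J N.
    apply: (IH _ _ _ _ (hall_condition_subset sJK hK)).
    by move: size_t; rewrite (sum_setD c sJK); lia.
  have [N2 tN2] :
      exists N, transversal (Y + \sum_(j in J) S j)%MS c (K :\: J) N.
    apply: (IH _ _ _ _ (hall_condition_contract sJK tight hK)).
    by move: size_t; rewrite (sum_setD c sJK); lia.
  by exists (N1 + N2)%MS; apply: transversal_split tN1 tN2.
have [j0 /andP[j0K cj0] | c0] := pickP (fun j => (j \in K) && (0 < c j)%N).
  have nSY : ~~ (S j0 <= Y)%MS.
    apply: contraTN cj0 => /addsmx_idPl SY; rewrite -leqNgt.
    by have := hK [set j0]; rewrite sub1set !big_set1 SY => /(_ j0K); lia.
  have [i0 vY] := row_subPn nSY.
  have slack' J : J \subset K -> J != set0 -> J != K ->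
      (\rank Y + \sum_(j in J) c j < \rank (Y + \sum_(j in J) S j))%N.
    by move=> sJK J0 JK; have := slack J; rewrite sJK J0 JK /= ltnNge => ->.
  have [N tN] : exists N,
      transversal (row i0 (S j0) + Y)%MS (fun j => c j - (j == j0))%N K N.
    apply: (IH _ _ _ _ (hall_condition_add_vector j0K vY cj0 slack' hK)).
    have : (0 < \sum_(j in K) c j)%N by rewrite (big_setD1 j0 j0K) ltn_addr.
    by move: size_t; rewrite sum_subn_pred1 // j0K /=; lia.
  have tvN := transversal_add_vector j0K (row_sub i0 _) vY tN.
  by exists (row i0 (S j0) + N)%MS.
exists 0; split; rewrite ?sub0mx ?cap0mx // => j jK.
by have := c0 j; rewrite jK /= lt0n => /negbFE/eqP->.
Qed.

Lemma subfamily_transversal Y c K : K != set0 ->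
  (\rank Y + \sum_(j in K) c j <= \rank (Y + \sum_(j in K) S j))%N ->
  exists J N, [/\ J \subset K, J != set0
                & transversal (Y + \sum_(j in (K :\: J)%SET) S j)%MS c J N].
Proof.
move=> K0 hK.
(* A proper J0 of minimal deficiency h: minimality of h J0 is exactly the Hall
   condition for the complementary subfamily over Y + sum_(j in J0) S j. *)
pose h J := (\rank (Y + \sum_(j in J) S j) + \sum_(j in K :\: J) c j)%N.
have set0K : set0 \proper K by rewrite proper0.
have [J0 J0K minJ0] := @arg_minnP _ set0 (fun J => J \proper K) h set0K.
have hJ0 J : J \subset K -> (h J0 <= h J)%N.
  move=> sJK; have [-> | JK] := eqVneq J K.
    apply: leq_trans (minJ0 _ set0K) _.
    by rewrite /h setDv setD0 !big_set0 addsmx0 addn0.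
  by rewrite minJ0 // properEneq JK.
have [sJ0K nsKJ0] := andP J0K.
have [N tN] : exists N, transversal (Y + \sum_(j in J0) S j)%MS c (K :\: J0) N.
  apply: hall_transversal => J sJ.
  have sUK : J0 :|: J \subset K.
    by rewrite subUset sJ0K (subset_trans sJ) ?subsetDl.
  have := hJ0 _ sUK; rewrite /h rank_addsmx_sumsmx_setU (sum_setD c sJ) setDDl.
  lia.
exists (K :\: J0), N; split; rewrite ?subsetDl ?setD_eq0 //.
by rewrite setDDr setDv set0U (setIidPr sJ0K).
Qed.

End Rado.

Section ProjectiveSubspaces.
Variables (F : fieldType) (N d : nat).
Implicit Types L A Y : 'M[F]_N.+1.

Lemma meetsS L (L' : 'M[F]_N.+1) A : (L <= L')%MS -> meets L A -> meets L' A.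
Proof.
rewrite /meets -!submx0 => sLL'; apply: contra.
exact: submx_trans (capmxS sLL' (submx_refl A)).
Qed.

Lemma meets_capmx L A Y : (A <= Y)%MS -> meets L A -> meets (L :&: Y)%MS A.
Proof.
move=> sAY; rewrite /meets -!submx0; apply: contra; apply: submx_trans.
by rewrite sub_capmx capmxSr andbT capmxS.
Qed.

Lemma sub_spanS (Lam : 'I_d -> 'M[F]_N.+1) (A : {set 'I_d}) i :
  i \in A -> (Lam i <= spanS Lam A)%MS.
Proof. by move=> iA; apply: (sumsmx_sup i). Qed.

Lemma not_SP r (Lam : 'I_d -> 'M[F]_N.+1) (A : {set 'I_d}) :
  ~ SP r Lam A -> exists q L, [/\ q \in A, \rank L = r.+1,
    forall i, i \in A -> i != q -> meets L (Lam i) & ~~ meets L (Lam q)].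
Proof.
move=> nSP; apply: NNPP => nex; apply: nSP => q qA L rL mL.
by case: (boolP (meets L (Lam q))) => // nmLq; case: nex; exists q, L.
Qed.

End ProjectiveSubspaces.

Section Geometry.
Variables (F : fieldType) (n k d : nat) (Lam : 'I_d -> 'M[F]_n.+1).
Hypotheses (k_le_n : (k <= n)%N) (rank_Lam : forall i, \rank (Lam i) = k).

Lemma SP_meets A q L : SP (n - k) Lam A -> q \in A ->
  (forall i, i \in A -> i != q -> meets L (Lam i)) -> meets L (Lam q).
Proof.
move=> hSP qA mL; apply: contraT; rewrite negbK => /eqP Lq0.
have [L' [sLL' rL' L'q0]] := complement_ext Lq0.
have rL'' : \rank L' = (n - k).+1 by move: rL'; rewrite rank_Lam; lia.
have := hSP q qA L' rL'' (fun i iA iq => meetsS sLL' (mL i iA iq)).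
by rewrite /meets L'q0 eqxx.
Qed.

Lemma SP_meeting_complement_contra (I : finType) (B : I -> {set 'I_d})
    (J : {set I}) (j : I) (Y N : 'M[F]_n.+1) :
  SP (n - k) Lam setT -> j \in J ->
  {in J, forall l, SP (n - k) Lam (B l)} -> ~ SP (n - k) Lam (~: B j) ->
  {in J, forall l, l != j -> [disjoint B l & B j]} ->
  (forall i, i \notin \bigcup_(l in J) B l -> (Lam i <= Y)%MS) ->
  (N :&: Y)%MS = 0 ->
  (forall i, i \in \bigcup_(l in J) B l -> meets N (Lam i)) -> False.
Proof.
move=> SPT jJ SPB nSPj disjB sLY NY0 mN.
have [q [L [qBj rL mL nmLq]]] := not_SP nSPj.
have qU : q \notin \bigcup_(l in J) B l.
  apply/bigcupP => -[l lJ ql].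
  have lj : l != j by apply: contraTneq ql => ->; rewrite inE in qBj.
  move/negP: nmLq; apply; apply: (SPB l lJ q ql L rL) => i il iq.
  by apply: mL iq; rewrite inE (disjointFr (disjB l lJ lj) il).
have LYq0 : ((L :&: Y) :&: Lam q)%MS = 0.
  apply/eqP; rewrite -submx0; move: nmLq; rewrite /meets negbK -submx0.
  by apply: submx_trans; rewrite capmxS ?capmxSl.
have L'q0 : ((L :&: Y + N) :&: Lam q)%MS = 0.
  exact: capmx_addsmx_eq0 (capmxSr L Y) (sLY q qU) NY0 LYq0.
suff : meets (L :&: Y + N)%MS (Lam q) by rewrite /meets L'q0 eqxx.
apply: (SP_meets SPT (in_setT q)) => i _ iq.
have [iU | iU] := boolP (i \in \bigcup_(l in J) B l).
  exact: meetsS (addsmxSr _ _) (mN i iU).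
apply: meetsS (addsmxSl _ _) (meets_capmx (sLY i iU) (mL i _ iq)).
by rewrite inE; apply: contra iU => iBj; apply/bigcupP; exists j.
Qed.

(* A subspace cutting S_l := spanS Lam (B l) in rank at least (rank S_l).+1 - k
   meets every rank-k subspace of S_l. *)
Theorem rank_spanS_lt (I : finType) (B : I -> {set 'I_d}) (K : {set I}) :
  SP (n - k) Lam setT -> K != set0 ->
  {in K &, forall l l', l != l' -> [disjoint B l & B l']} ->
  {in K, forall l, SP (n - k) Lam (B l)} ->
  {in K, forall l, ~ SP (n - k) Lam (~: B l)} ->
  (\rank (spanS Lam setT) <
     \rank (spanS Lam (~: \bigcup_(l in K) B l))
     + \sum_(l in K) ((\rank (spanS Lam (B l))).+1 - k))%N.
Proof.
move=> SPT K0 disjB SPB nSPB.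
set U := \bigcup_(l in K) B l.
rewrite -(setUCr U) /spanS (sumsmx_setU Lam) addsmxC.
rewrite (adds_eqmx (eqmx_refl _) (sumsmx_bigcup Lam B K)).
rewrite ltnNge; apply/negP => hK.
have [J [N [sJK J0 [_ NY rN]]]] := subfamily_transversal K0 hK.
have [j jJ] := set0Pn _ J0; have JK := subsetP sJK.
apply: (SP_meeting_complement_contra SPT jJ _ (nSPB j (JK j jJ)) _ _ NY).
- by move=> l lJ; apply: SPB (JK l lJ).
- by move=> l lJ; apply: disjB; rewrite ?JK.
- move=> i iJ; have [/bigcupP[l lK il] | iK] := boolP (i \in U).
    apply: submx_trans (addsmxSr _ _); apply: (sumsmx_sup l).
      by rewrite inE lK andbT; apply: contra iJ => lJ; apply/bigcupP; exists l.
    exact: sub_spanS.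
  by apply: submx_trans (addsmxSl _ _); apply: sub_spanS; rewrite inE.
- move=> i /bigcupP[l lJ il]; apply: meetsS (capmxSl N _) _.
  apply: capmx_neq0_rank (capmxSr N _) (sub_spanS Lam il) _.
  by rewrite rank_Lam addnC -leq_subLR; apply: rN l lJ.
Qed.

End Geometry.

Section ConsecutiveBlocks.
Variables (d m : nat) (ds : 'I_m -> nat).

Definition block_start t := (\sum_(l < m | l < t) ds l)%N.

Lemma blockE j i :
  (i \in block d ds j) = (block_start j <= i < block_start j.+1)%N.
Proof. by rewrite inE. Qed.

Lemma block_start_mono : {homo block_start : t1 t2 / (t1 <= t2)%N}.
Proof.
move=> t1 t2 le12; rewrite /block_start !(big_mkcond (fun l : 'I_m => l < _)%N).
by apply: leq_sum => l _; case: ifP => // /leq_trans->.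
Qed.

Lemma block_startS (j : 'I_m) : block_start j.+1 = (block_start j + ds j)%N.
Proof.
rewrite /block_start (bigD1 j) //= addnC; congr (_ + _)%N.
by apply: eq_bigl => l; rewrite ltnS ltn_neqAle andbC.
Qed.

Lemma block_start_max : block_start m = (\sum_(j < m) ds j)%N.
Proof. by apply: eq_bigl => l; rewrite ltn_ord. Qed.

Lemma block_disjoint (j1 j2 : 'I_m) :
  j1 != j2 -> [disjoint block d ds j1 & block d ds j2].
Proof.
wlog lt12 : j1 j2 / (j1 < j2)%N => [W | _].
  case: (ltngtP j1 j2) => [/W // | /W | /val_inj->]; last by rewrite eqxx.
  by rewrite eq_sym disjoint_sym.
rewrite disjoints_subset; apply/subsetP => i; rewrite in_setC !blockE.
case/andP=> _ /leq_trans/(_ (block_start_mono lt12)).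
by rewrite ltnNge => /negbTE->.
Qed.

Lemma block_cover t (i : 'I_d) : (t <= m)%N -> (i < block_start t)%N ->
  exists2 j : 'I_m, (j < t)%N & i \in block d ds j.
Proof.
elim: t => [|t IH] tm; first by rewrite /block_start big_pred0.
have [lt _ | ge lt] := ltnP i (block_start t).
  by have [j jt ij] := IH (ltnW tm) lt; exists j; rewrite // ltnW.
by exists (Ordinal tm); rewrite // blockE ge lt.
Qed.

Lemma blocks_before_last : (0 < m)%N -> (\sum_(j < m) ds j)%N = d ->
  ~: (\bigcup_(j in [set j : 'I_m | (j < m.-1)%N]) block d ds j)
    = block d ds m.-1.
Proof.
move=> m_gt0 sum_ds; apply/setP => i; rewrite inE blockE.
rewrite prednK // block_start_max sum_ds ltn_ord andbT leqNgt; congr (~~ _).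
apply/bigcupP/idP => [[j] | /block_cover[|j jt ij]].
- rewrite inE blockE => jm /andP[_ /leq_trans->] //.
  exact: block_start_mono.
- exact: leq_pred.
- by exists j; first rewrite inE.
Qed.

Lemma block_neq0 (j : 'I_m) : (\sum_(j < m) ds j)%N = d ->
  (0 < ds j)%N -> block d ds j != set0.
Proof.
move=> sum_ds ds_gt0; have le_d := block_start_mono (ltn_ord j).
rewrite block_start_max sum_ds block_startS in le_d.
have lt_d : (block_start j < d)%N.
  by apply: leq_trans le_d; rewrite -addn1 leq_add2l.
apply/set0Pn; exists (Ordinal lt_d).
by rewrite blockE /= leqnn block_startS -addn1 leq_add2l.
Qed.

End ConsecutiveBlocks.

Theorem lemma2p15 (F : numClosedFieldType) (n k d m : nat)
  (Lam : 'I_d -> 'M[F]_(n.+1)) (ds : 'I_m -> nat) (eps : 'I_m -> nat) :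
  (1 <= k)%N -> (k <= n)%N ->
  (forall i, \rank (Lam i) = k) ->
  SP (n - k) Lam setT ->
  (2 <= m)%N ->
  (forall j, 0 < ds j)%N ->
  (\sum_(j < m) ds j)%N = d ->
  (forall j : 'I_m, (j < m.-1)%N ->
      [/\ SP (n - k) Lam (block d ds j),
          ~ SP (n - k) Lam (~: block d ds j)
        & pdim (spanS Lam (block d ds j))
            <= (ds j)%:Z + k%:Z - 3 - (eps j)%:Z]) ->
  pdim (spanS Lam setT) <=
    pdim (spanS Lam (block d ds m.-1))
    + \sum_(j < m | (j < m.-1)%N) ((ds j)%:Z - (eps j)%:Z) - m%:Z.
Proof.
move=> _ k_le_n rank_Lam SPT m_ge2 ds_gt0 sum_ds hyp.
have m_gt0 : (0 < m)%N by apply: leq_trans m_ge2.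
pose K := [set j : 'I_m | (j < m.-1)%N].
have K0 : K != set0.
  by apply/set0Pn; exists (Ordinal m_gt0); rewrite inE -subn1 subn_gt0.
have [SPK nSPK pdimK] :
  [/\ {in K, forall j : 'I_m, SP (n - k) Lam (block d ds j)},
      {in K, forall j : 'I_m, ~ SP (n - k) Lam (~: block d ds j)}
    & {in K, forall j : 'I_m, pdim (spanS Lam (block d ds j))
                               <= (ds j)%:Z + k%:Z - 3 - (eps j)%:Z}].
  by split=> j; rewrite inE => /hyp[].
have := rank_spanS_lt k_le_n rank_Lam SPT K0
  (fun l l' _ _ => @block_disjoint d m ds l l') SPK nSPK.
rewrite blocks_before_last // => rank_lt.
have c_bound j : j \in K ->
    ((\rank (spanS Lam (block d ds j))).+1 - k + 1 + eps j <= ds j)%N.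
  move=> jK; have [i ij] := set0Pn _ (block_neq0 sum_ds (ds_gt0 j)).
  have := mxrankS (sub_spanS Lam ij); have := pdimK j jK.
  by rewrite rank_Lam /pdim; lia.
apply: le_trans (rank_lt_to_pdim_le rank_lt c_bound) _.
rewrite /pdim card_ord_lt ?leq_pred // prednK //.
by rewrite (eq_bigl (fun j : 'I_m => j < m.-1)%N) // => j; rewrite inE.
Qed.
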